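(* There is no Lie algebra homomorphism $s:L_1\to\Lambda_1(\mathbb{Q}\mathrm{Par})^+$ with $\varepsilon_2\circ s=\mathrm{id}_{L_1}$ such that $s$ maps $\mathbb{Q}x^m\frac{d}{dx}$ into $\mathbb{Q}\mathrm{Par}((m))$ for each $m\ge2$. In other words, the augmentation homomorphism $\varepsilon_2:\Lambda_1(\mathbb{Q}\mathrm{Par})^+\to L_1$ has no such splitting.
   Context: The nonsymmetric operad of partitions $\mathrm{Par}$: $\mathrm{Par}((1))=\{1\}$, and for $m\ge2$, $\mathrm{Par}((m))$ is the set of monomials $\prod_{i=1}^Nx_i^{a_i}$ with $N\ge2$, all $a_i\ge1$, $\sum a_i=m$. Partial composition: if $a_1+\dots+a_{l-1}+1\le s\le a_1+\dots+a_l$, then $\left(\prod_{i=1}^Nx_i^{a_i}\right)\circ_s\left(\prod_{k=1}^{N_s}x_k^{b_k}\right)=x_l^{a_l-1+\sum_kb_k}\prod_{i\ne l}x_i^{a_i}$; $1$ is a two-sided unit. $\Lambda_1(\mathbb{Q}\mathrm{Par})=\bigoplus_{m\ge2}\mathbb{Q}\mathrm{Par}((m))$ with Lie bracket $[c,d]=\sum_{t=1}^{j}d\circ_tc-\sum_{s=1}^{k}c\circ_sd$ for $c\in\mathrm{Par}((k))$, $d\in\mathrm{Par}((j))$. The involution $\iota$ of $\Lambda_1(\mathbb{Q}\mathrm{Par})$ is the linear map with $\iota(x_1^{a_1}x_2^{a_2}\cdots x_n^{a_n})=x_1^{a_n}x_2^{a_{n-1}}\cdots x_n^{a_1}$; it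 is a Lie algebra automorphism, and $\Lambda_1(\mathbb{Q}\mathrm{Par})^+=\{u:\iota(u)=u\}$ is a Lie subalgebra. $L_1=x^2\mathbb{Q}[x]\frac{d}{dx}$, and $\varepsilon_2$ is the restriction to $\Lambda_1(\mathbb{Q}\mathrm{Par})^+$ of the augmentation homomorphism, which sends every monomial in $\mathrm{Par}((m))$ to $x^m\frac{d}{dx}$. *)

From HB Require Import structures.
From mathcomp Require Import all_boot all_algebra.
From mathcomp Require Import finmap.
From mathcomp Require Import monalg.
Set Implicit Arguments. Unset Strict Implicit. Unset Printing Implicit Defensive.
Import GRing.Theory.
Local Open Scope ring_scope.

(* A monomial x_1^{a_1} ... x_N^{a_N} of Par((m)), m >= 2, is encoded by the
   sequence [:: a_1; ...; a_N] with N >= 2, all a_i >= 1; its arity m is sumn. *)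
Definition is_par (c : seq nat) : bool :=
  (2 <= size c)%N && all (fun a => 0 < a)%N c.

Definition arity (c : seq nat) : nat := sumn c.

Notation QPar := {malg rat[seq nat]}.

Definition inLambda (u : QPar) : bool := all is_par (msupp u).

Definition homog (m : nat) (u : QPar) : bool :=
  all (fun c => is_par c && (arity c == m)) (msupp u).

(* partial composition c o_s d, which (by the defining formula) only depends on
   the arity j = sum b_k of d: if a_1+..+a_{l-1}+1 <= s <= a_1+..+a_l then
   a_l is replaced by a_l - 1 + j.  s is 1-indexed. *)
Fixpoint ins (c : seq nat) (s j : nat) : seq nat :=
  match c with
  | [::] => [::]
  | a :: c' => if (s <= a)%N then (a - 1 + j)%N :: c' else a :: ins c' (s - a) j
  end.

Definition pcomp (c : seq nat) (s : nat) (d : seq nat) : seq nat :=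
  ins c s (arity d).

Definition brk (c d : seq nat) : QPar :=
  \sum_(1 <= t < (arity d).+1) << pcomp d t c >>
  - \sum_(1 <= s < (arity c).+1) << pcomp c s d >>.

Definition lie (u v : QPar) : QPar :=
  \sum_(c <- msupp u) \sum_(d <- msupp v) (u@_c * v@_d) *: brk c d.

Definition iota_inv (u : QPar) : QPar :=
  \sum_(c <- msupp u) u@_c *: << rev c >>.

Definition inLambdaPlus (u : QPar) : Prop := inLambda u /\ iota_inv u = u.

(* L_1 = x^2 Q[x] d/dx, the vector field p(x) d/dx encoded by p. *)
Definition inL1 (p : {poly rat}) : Prop := p`_0 = 0 /\ p`_1 = 0.

(* [f d/dx, g d/dx] = (f g' - g f') d/dx *)
Definition lieL1 (p q : {poly rat}) : {poly rat} := p * q^`() - q * p^`().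

Definition aug (u : QPar) : {poly rat} :=
  \sum_(c <- msupp u) u@_c *: 'X^(arity c).

From Pilot Require Import Defs.
From HB Require Import structures.
From mathcomp Require Import all_boot all_algebra.
From mathcomp Require Import finmap.
From mathcomp Require Import monalg.
From mathcomp Require Import lra.
Set Implicit Arguments. Unset Strict Implicit. Unset Printing Implicit Defensive.
Import GRing.Theory.
Local Open Scope ring_scope.

(* The constraints leave a single free parameter: s(x^2 d/dx) = x_1 x_2 by the augmentation, and
   by iota-invariance s(x^3 d/dx) = (1 - 2b) x_1 x_2 x_3 + b (x_1 x_2^2 + x_1^2 x_2) for some
   rational b.  The brackets [x^2, x^3] = x^4 and [x^2, x^4] = 2 x^5 then determine s(x^4 d/dx)
   and s(x^5 d/dx), while x^6 d/dx is reached twice, as [x^2, x^5] / 3 and as [x^3, x^4].  The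
   coefficients of x_1^3 x_2^3 in the two images are 4b - 2/3 and 4b - 2. *)

Fixpoint compositions (n m : nat) : seq (seq nat) :=
  match n, m with
  | _, 0 => [:: [::]]
  | 0, _.+1 => [::]
  | n'.+1, m => [seq i :: c | i <- iota 1 m, c <- compositions n' (m - i)]
  end.

Definition par_enum (m : nat) : seq (seq nat) :=
  [seq c <- compositions m m | (2 <= size c)%N].

Lemma mem_compositions (c : seq nat) (n : nat) :
  all (fun a => 0 < a)%N c -> (size c <= n)%N -> c \in compositions n (sumn c).
Proof.
elim: c n => [|a c IHc] [|n] //= /andP[a_gt0 c_pos] c_le_n.
case: a a_gt0 => // a _.
apply/allpairsPdep; exists a.+1, c; split => //.
  by rewrite mem_iota /= add1n ltnS addSn ltnS leq_addr.
by rewrite addSn subSS addKn IHc.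
Qed.

Lemma uniq_compositions (n m : nat) : uniq (compositions n m).
Proof.
elim: n m => [|n IHn] [|m] //.
apply: allpairs_uniq_dep => [||[i c] [j d] _ _ [-> ->]] //; exact: iota_uniq.
Qed.

Lemma homog_msupp_par_enum (m : nat) (u : QPar) :
  homog m u -> {subset msupp u <= par_enum m}.
Proof.
move=> /allP u_homog c /u_homog /andP[/andP[size_c c_pos] /eqP <-].
rewrite mem_filter size_c mem_compositions //.
elim: c c_pos {size_c} => //= a c IHc /andP[a_gt0 /IHc].
by rewrite -add1n; apply: leq_add.
Qed.

Lemma uniq_par_enum (m : nat) : uniq (par_enum m).
Proof. exact/filter_uniq/uniq_compositions. Qed.

Section SupportWitness.

Variables (D : seq (seq nat)) (u : QPar).
Hypotheses (uniq_D : uniq D) (supp_u : {subset msupp u <= D}).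

Lemma big_msuppw (V : zmodType) (F : seq nat -> rat -> V) :
  (forall c, F c 0 = 0) -> \sum_(c <- msupp u) F c u@_c = \sum_(c <- D) F c u@_c.
Proof.
move=> F0; symmetry; rewrite (bigID (mem (msupp u))) /= [X in _ + X]big1 ?addr0; last first.
  by move=> c /mcoeff_outdom ->.
rewrite -big_filter; apply: perm_big; apply: uniq_perm; rewrite ?filter_uniq ?fset_uniq //.
by move=> c; rewrite mem_filter; case: (boolP (c \in msupp u)) => // /supp_u ->.
Qed.

Lemma augEw : aug u = \sum_(c <- D) u@_c *: 'X^(arity c).
Proof.
by rewrite /aug (big_msuppw (F := fun c x => x *: 'X^(arity c))) // => c; rewrite scale0r.
Qed.

Lemma mcoeff_iota_invw (k : seq nat) :
  (iota_inv u)@_k = \sum_(c <- D) u@_c * (rev c == k)%:R.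
Proof.
rewrite /iota_inv raddf_sum -(big_msuppw (F := fun c x => x * (rev c == k)%:R)) => [|c].
  by apply: eq_bigr => c _; rewrite /= mcoeffZ mcoeffU.
by rewrite /= mul0r.
Qed.

End SupportWitness.

(* Named so that the expanded coefficient sums below never expose [brk], whose unfolding makes
   rewriting with [mcoeff] lemmas prohibitively slow. *)
Definition brk_coef (c d k : seq nat) : rat :=
  (count (fun t => Defs.pcomp d t c == k) (iota 1 (arity d)))%:R
  - (count (fun t => Defs.pcomp c t d == k) (iota 1 (arity c)))%:R.

Lemma mcoeff_brk (c d k : seq nat) : (brk c d)@_k = brk_coef c d k.
Proof.
rewrite /brk /brk_coef mcoeffB !raddf_sum /index_iota !subn1 /= -!sum1_count !natr_sum.
by rewrite sumrN; congr (_ - _); rewrite [RHS]big_mkcond; apply: eq_bigr => t _;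
  rewrite mcoeffU; case: eqP.
Qed.

Lemma mcoeff_liew (D1 D2 : seq (seq nat)) (u v : QPar) (k : seq nat) :
  uniq D1 -> uniq D2 -> {subset msupp u <= D1} -> {subset msupp v <= D2} ->
  (lie u v)@_k = \sum_(c <- D1) \sum_(d <- D2) u@_c * v@_d * brk_coef c d k.
Proof.
move=> uniq_D1 uniq_D2 supp_u supp_v.
rewrite /lie raddf_sum -(big_msuppw uniq_D1 supp_u
  (F := fun c x => \sum_(d <- D2) x * v@_d * brk_coef c d k)) => [|c]; last first.
  by apply: big1 => d _; rewrite !mul0r.
apply: eq_bigr => c _; rewrite raddf_sum
  -(big_msuppw uniq_D2 supp_v (F := fun d y => u@_c * y * brk_coef c d k)) => [|d]; last first.
  by rewrite mulr0 mul0r.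
by apply: eq_bigr => d _; rewrite /= mcoeffZ mcoeff_brk.
Qed.

Lemma lieL1_Xn (j k : nat) : (j <= k)%N ->
  lieL1 'X^(j.+2) 'X^(k.+2) = (k - j)%:R *: 'X^((j + k).+3) :> {poly rat}.
Proof.
move=> le_jk; rewrite /lieL1 !derivXn /= !mulrnAr -!exprD.
rewrite [(k.+2 + _)%N]addnC !addnS !addSn -mulrnBr; last by rewrite !ltnS.
by rewrite scaler_nat subSS subSS.
Qed.

Lemma inL1_Xn (m : nat) : (2 <= m)%N -> inL1 'X^m.
Proof. by case: m => [|[|m]] // _; rewrite /inL1 !coefXn. Qed.

Lemma inL1_0 : inL1 0.
Proof. by split; rewrite coef0. Qed.

Lemma par_enum2 : par_enum 2 = [:: [:: 1; 1]]%N.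
Proof. by []. Qed.

Lemma par_enum3 : par_enum 3 = [:: [:: 1; 1; 1]; [:: 1; 2]; [:: 2; 1]]%N.
Proof. by []. Qed.

Lemma par_enum4 : par_enum 4 =
  [:: [:: 1; 1; 1; 1]; [:: 1; 1; 2]; [:: 1; 2; 1]; [:: 1; 3];
      [:: 2; 1; 1]; [:: 2; 2]; [:: 3; 1]]%N.
Proof. by []. Qed.

Lemma par_enum5 : par_enum 5 =
  [:: [:: 1; 1; 1; 1; 1]; [:: 1; 1; 1; 2]; [:: 1; 1; 2; 1]; [:: 1; 1; 3];
      [:: 1; 2; 1; 1]; [:: 1; 2; 2]; [:: 1; 3; 1]; [:: 1; 4];
      [:: 2; 1; 1; 1]; [:: 2; 1; 2]; [:: 2; 2; 1]; [:: 2; 3];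
      [:: 3; 1; 1]; [:: 3; 2]; [:: 4; 1]]%N.
Proof. by []. Qed.

Section DegreeSix.

Variables u2 u3 u4 u5 : QPar.
Hypotheses (supp_u2 : {subset msupp u2 <= par_enum 2})
           (supp_u3 : {subset msupp u3 <= par_enum 3})
           (supp_u4 : {subset msupp u4 <= par_enum 4})
           (supp_u5 : {subset msupp u5 <= par_enum 5}).
Hypotheses (u2_11 : u2@_[:: 1; 1]%N = 1)
           (u3_111 : u3@_[:: 1; 1; 1]%N = 1 - 2 * u3@_[:: 1; 2]%N)
           (u3_21 : u3@_[:: 2; 1]%N = u3@_[:: 1; 2]%N)
           (u4E : u4 = lie u2 u3)
           (u5E : 2 *: u5 = lie u2 u4).

Lemma mcoeff_u4 (k : seq nat) :
  u4@_k = \sum_(c <- par_enum 2) \sum_(d <- par_enum 3) u2@_c * u3@_d * brk_coef c d k.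
Proof. by rewrite u4E (mcoeff_liew _ (uniq_par_enum 2) (uniq_par_enum 3)). Qed.

Lemma mcoeff_u5 (k : seq nat) :
  u5@_k = 2^-1 * \sum_(c <- par_enum 2) \sum_(d <- par_enum 4) u2@_c * u4@_d * brk_coef c d k.
Proof.
rewrite -(mcoeff_liew _ (uniq_par_enum 2) (uniq_par_enum 4)) // -u5E mcoeffZ.
by rewrite mulrA mulVf ?mul1r.
Qed.

Lemma mcoeff33_lie_X2_X5 : (lie u2 u5)@_[:: 3; 3]%N = 12 * u3@_[:: 1; 2]%N - 2.
Proof.
rewrite (mcoeff_liew _ (uniq_par_enum 2) (uniq_par_enum 5)) //.
rewrite par_enum2 par_enum5 !big_cons !big_nil !mcoeff_u5 par_enum2 par_enum4.
rewrite !big_cons !big_nil !mcoeff_u4 par_enum2 par_enum3 !big_cons !big_nil.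
rewrite u2_11 u3_21 u3_111 /brk_coef /=.
lra.
Qed.

Lemma mcoeff33_lie_X3_X4 : (lie u3 u4)@_[:: 3; 3]%N = 4 * u3@_[:: 1; 2]%N - 2.
Proof.
rewrite (mcoeff_liew _ (uniq_par_enum 3) (uniq_par_enum 4)) //.
rewrite par_enum3 par_enum4 !big_cons !big_nil !mcoeff_u4 par_enum2 par_enum3.
rewrite !big_cons !big_nil u2_11 u3_21 u3_111 /brk_coef /=.
lra.
Qed.

End DegreeSix.

Section GradedSplitting.

Variable s : {poly rat} -> QPar.
Hypotheses
  (s_linear : forall (a : rat) (p q : {poly rat}), inL1 p -> inL1 q ->
     s (a *: p + q) = a *: s p + s q)
  (s_plus : forall p, inL1 p -> inLambdaPlus (s p))
  (s_lie : forall p q, inL1 p -> inL1 q -> s (lieL1 p q) = lie (s p) (s q))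
  (s_aug : forall p, inL1 p -> aug (s p) = p)
  (s_homog : forall m : nat, (2 <= m)%N -> homog m (s 'X^m)).

Lemma s_scale (a : rat) (p : {poly rat}) : inL1 p -> s (a *: p) = a *: s p.
Proof.
have s0 : s 0 = 0.
  have := s_linear 1 inL1_0 inL1_0; rewrite !scale1r !addr0 -{1}[s 0]addr0.
  by move=> /(addrI (s 0)) <-.
move=> Lp; rewrite -[a *: p]addr0 s_linear ?s0 ?addr0 //; exact: inL1_0.
Qed.

Lemma msupp_s_Xn (m : nat) : (2 <= m)%N -> {subset msupp (s 'X^m) <= par_enum m}.
Proof. by move=> m_ge2; apply/homog_msupp_par_enum/s_homog. Qed.

Lemma lie_s_Xn (j k : nat) : (j <= k)%N ->
  lie (s 'X^(j.+2)) (s 'X^(k.+2)) = (k - j)%:R *: s 'X^((j + k).+3).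
Proof.
move=> le_jk; rewrite -s_lie ?lieL1_Xn ?s_scale //; exact: inL1_Xn.
Qed.

Lemma mcoeff_s_X2 : (s 'X^2)@_[:: 1; 1]%N = 1.
Proof.
have := congr1 (fun p : {poly rat} => p`_2) (s_aug (inL1_Xn (isT : 2 <= 2)%N)).
rewrite (augEw (uniq_par_enum 2) (msupp_s_Xn _)) // par_enum2 big_cons big_nil.
by rewrite addr0 coefZ coefXn mulr1.
Qed.

Lemma mcoeff_s_X3_rev : (s 'X^3)@_[:: 2; 1]%N = (s 'X^3)@_[:: 1; 2]%N.
Proof.
have := congr1 (mcoeff [:: 1; 2]%N) (s_plus (inL1_Xn (isT : 2 <= 3)%N)).2.
rewrite (mcoeff_iota_invw (uniq_par_enum 3) (msupp_s_Xn _)) // par_enum3.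
by rewrite !big_cons big_nil /= => <-; rewrite !mulr0 mulr1 !add0r addr0.
Qed.

Lemma mcoeff_s_X3 :
  (s 'X^3)@_[:: 1; 1; 1]%N = 1 - 2 * (s 'X^3)@_[:: 1; 2]%N.
Proof.
have := congr1 (fun p : {poly rat} => p`_3) (s_aug (inL1_Xn (isT : 2 <= 3)%N)).
rewrite (augEw (uniq_par_enum 3) (msupp_s_Xn _)) // par_enum3 !big_cons big_nil.
rewrite !coefD !coefZ !coefXn /= coef0 addr0 !mulr1 mcoeff_s_X3_rev.
lra.
Qed.

Lemma no_graded_splitting : False.
Proof.
have supp2 := msupp_s_Xn (isT : 2 <= 2)%N; have supp3 := msupp_s_Xn (isT : 2 <= 3)%N.
have supp4 := msupp_s_Xn (isT : 2 <= 4)%N; have supp5 := msupp_s_Xn (isT : 2 <= 5)%N.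
have h2 := mcoeff_s_X2; have h3 := mcoeff_s_X3; have h3_rev := mcoeff_s_X3_rev.
have X4 : s 'X^4 = lie (s 'X^2) (s 'X^3) by rewrite (lie_s_Xn (isT : 0 <= 1)%N) scale1r.
have X5 : 2 *: s 'X^5 = lie (s 'X^2) (s 'X^4) by rewrite (lie_s_Xn (isT : 0 <= 2)%N).
have := congr1 (mcoeff [:: 3; 3]%N) (lie_s_Xn (isT : 0 <= 3)%N).
rewrite (mcoeff33_lie_X2_X5 (u3 := s 'X^3) (u4 := s 'X^4)) // mcoeffZ subn0.
have := congr1 (mcoeff [:: 3; 3]%N) (lie_s_Xn (isT : 1 <= 2)%N).
rewrite (mcoeff33_lie_X3_X4 (u2 := s 'X^2)) // mcoeffZ mul1r => <-.
lra.
Qed.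

End GradedSplitting.

Theorem proposition7p2 :
  ~ exists s : {poly rat} -> {malg rat[seq nat]},
    [/\ (forall (a : rat) (p q : {poly rat}), inL1 p -> inL1 q ->
           s (a *: p + q) = a *: s p + s q),
        (forall p, inL1 p -> inLambdaPlus (s p)),
        (forall p q, inL1 p -> inL1 q -> s (lieL1 p q) = lie (s p) (s q)),
        (forall p, inL1 p -> aug (s p) = p)
      & (forall m : nat, (2 <= m)%N -> homog m (s 'X^m))].
Proof.
move=> [s [s_linear s_plus s_lie s_aug s_homog]].
exact: (no_graded_splitting s_linear s_plus s_lie s_aug s_homog).
Qed.
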